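(* Let $p$ be an odd prime, $r\ge3$ with $p\nmid r$, $d\ge2$, and let $G=V\rtimes_\psi D$ with $V=\mathbb{Z}_p^d$, $D=\mathrm{D}_{2r}$ and $\psi:D\to\mathrm{GL}(V)$ an irreducible representation over $\mathbb{F}_p$. Let $x,y\in D$ be involutions with $D=\langle x,y\rangle$, and let $v,v'$ be non-identity elements of $\mathrm{C}_V(x)$. Then $\mathsf{RotaMap}(G,vx,y)\cong\mathsf{RotaMap}(G,v'x,y)$.
   Context: $\mathrm{D}_{2r}$ is the dihedral group of order $2r$; $V\rtimes_\psi D$ is the semidirect product where $D$ acts on $V=\mathbb{F}_p^d$ via $\psi$, and $\mathrm{C}_V(x)$ is the centralizer of $x$ in $V$. For a group $G$ and $\rho,\tau\in G$ with $G=\langle\rho,\tau\rangle$ and $|\tau|=2$ (a rotary pair), $\mathsf{RotaMap}(G,\rho,\tau)$ is the map whose vertices, edges and faces are the left cosets of $\langle\rho\rangle$, $\langle\tau\rangle$ and $\langle\rho\tau\rangle$ in $G$ respectively, two objects being incident iff their intersection is nonempty; it is an orientable map on which $G$ acts (by left multiplication) regularly on arcs with cyclic vertex and face stabilizers. Isomorphism means isomorphism of maps. *)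

From HB Require Import structures.
From mathcomp Require Import all_boot all_fingroup all_solvable.
Set Implicit Arguments. Unset Strict Implicit. Unset Printing Implicit Defensive.
Local Open Scope group_scope.

Section RotaMap.
Variable gT : finGroupType.
Implicit Types (G : {group gT}) (rho tau : gT) (A B : {set gT}).

Definition rm_vertices G rho : {set {set gT}} := lcosets <[rho]> G.
Definition rm_edges G tau : {set {set gT}} := lcosets <[tau]> G.
Definition rm_faces G rho tau : {set {set gT}} := lcosets <[rho * tau]> G.

Definition rm_incident A B : bool := A :&: B != set0.

Definition bij_onto (f : {set gT} -> {set gT}) (X Y : {set {set gT}}) : Prop :=
  {in X &, injective f} /\ f @: X = Y.

Definition rotamap_iso G rho tau rho' tau' : Prop :=
  exists (fv fe ff : {set gT} -> {set gT}),
    [/\ bij_onto fv (rm_vertices G rho) (rm_vertices G rho'),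
        bij_onto fe (rm_edges G tau) (rm_edges G tau') &
        bij_onto ff (rm_faces G rho tau) (rm_faces G rho' tau')] /\
    [/\
        {in rm_vertices G rho & rm_edges G tau, forall a b,
            rm_incident (fv a) (fe b) = rm_incident a b},
        {in rm_vertices G rho & rm_faces G rho tau, forall a b,
            rm_incident (fv a) (ff b) = rm_incident a b} &
        {in rm_edges G tau & rm_faces G rho tau, forall a b,
            rm_incident (fe a) (ff b) = rm_incident a b}].
End RotaMap.

From HB Require Import structures.
From mathcomp Require Import all_boot all_fingroup all_solvable.
Set Implicit Arguments. Unset Strict Implicit. Unset Printing Implicit Defensive.
Local Open Scope group_scope.

(* An automorphism phi of G carries RotaMap(G, rho, tau) onto RotaMap(G, phi rho, phi tau), so
   it suffices to find one fixing y and mapping v x to v' x; a g |-> f(a) g (a in V, g in D) is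
   such an automorphism for any D-equivariant automorphism f of V with f v = v'.  Let R be the
   set of D-equivariant endomorphisms of V and W = R v <= C_V(x).  As x and y both conjugate xy
   to yx, c : a |-> a^(xy) a^(yx) lies in R, and w^(yx) = c(w) (w^-1)^y for w in W; hence
   W W^y is D-invariant, so it is V by irreducibility.  For w = a b in C_V(x) with a in W and
   b in W^y, b then lies in C_V(x) and C_V(x^y), whose intersection is trivial (otherwise x
   centralises V, and a nontrivial u or u u^y generates a D-invariant cyclic subgroup of the
   non-cyclic V).
   So C_V(x) = W, and the f in R with f v = v' is injective since its kernel is D-invariant. *)

Section RotaMapMorphim.
Variables (gT : finGroupType) (G : {group gT}) (f : {morphism G >-> gT}).
Hypotheses (injf : 'injm f) (imf : f @* G = G).

Lemma lcosets_cycle_sub h A : h \in G -> A \in lcosets <[h]> G -> A \subset G.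
Proof. by move=> Gh /lcosetsP[g Gg ->]; rewrite mul_subG ?sub1set ?cycle_subG. Qed.

Lemma morphim_lcoset_cycle g h :
  g \in G -> h \in G -> f @* (g *: <[h]>) = f g *: <[f h]>.
Proof.
by move=> Gg Gh; rewrite morphimMl ?sub1set // morphim_set1 // morphim_cycle.
Qed.

Lemma morphim_lcosets_cycle h : h \in G ->
  (fun A => f @* A) @: lcosets <[h]> G = lcosets <[f h]> G.
Proof.
move=> Gh; apply/setP => B; apply/imsetP/lcosetsP => [[A] | [g']].
  case/lcosetsP=> g Gg -> ->; exists (f g); last by rewrite morphim_lcoset_cycle.
  by have := mem_morphim f Gg Gg; rewrite imf.
rewrite -{1}imf => /morphimP[g _ Gg ->] ->; exists (g *: <[h]>).
  by apply/lcosetsP; exists g.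
by rewrite morphim_lcoset_cycle.
Qed.

Lemma bij_onto_morphim_lcosets h : h \in G ->
  bij_onto (fun A => f @* A) (lcosets <[h]> G) (lcosets <[f h]> G).
Proof.
move=> Gh; split; last exact: morphim_lcosets_cycle.
move=> A B /(lcosets_cycle_sub Gh) sAG /(lcosets_cycle_sub Gh) sBG.
exact: injm_morphim_inj.
Qed.

Lemma rm_incident_morphim h A B : h \in G -> A \in lcosets <[h]> G ->
  rm_incident (f @* A) (f @* B) = rm_incident A B.
Proof.
move=> Gh /(lcosets_cycle_sub Gh) sAG.
by rewrite /rm_incident -(injmI injf) morphim_eq0 // subIset ?sAG.
Qed.

Lemma rotamap_iso_morphim rho tau : rho \in G -> tau \in G ->
  rotamap_iso G rho tau (f rho) (f tau).
Proof.
move=> Grho Gtau; have Grt : rho * tau \in G by rewrite groupM.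
exists (fun A => f @* A), (fun A => f @* A), (fun A => f @* A); split.
  split; rewrite /rm_faces -?morphM //; exact: bij_onto_morphim_lcosets.
split=> A B VA _; [exact: rm_incident_morphim Grho VA
                  | exact: rm_incident_morphim Grho VA
                  | exact: rm_incident_morphim Gtau VA].
Qed.

End RotaMapMorphim.

Lemma sdprod_equivariant_aut (gT : finGroupType) (G V D : {group gT})
    (f : {morphism V >-> gT}) :
    V ><| D = G -> 'injm f -> f @* V \subset V ->
    {in V & D, forall a g, f (a ^ g) = f a ^ g} ->
  exists phi : {morphism G >-> gT},
    [/\ 'injm phi, phi @* G = G & {in V & D, forall a g, phi (a * g) = f a * g}].
Proof.
move=> defG injf sfV fJ; have [_ defVD _ tiVD] := sdprodP defG.
have actf : {in V & D, morph_act 'J 'J f (idm D)} by move=> a g Va Dg; apply: fJ.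
have injphi : 'injm (sdprodm defG actf).
  rewrite injm_sdprodm injf injm_idm morphim_idm //=.
  by apply/eqP/trivgP; rewrite -tiVD setSI.
exists (sdprodm defG actf); split=> // [|a g Va Dg]; last first.
  by rewrite [LHS]/= sdprodmE.
apply/eqP; rewrite eqEcard card_injm // leqnn andbT.
by rewrite im_sdprodm morphim_idm // -defVD mulSg.
Qed.

Lemma cent1_conjgP (gT : finGroupType) (a g : gT) : reflect (a ^ g = a) (a \in 'C[g]).
Proof. by apply: (iffP cent1P) => [/commgP/conjg_fixP | /conjg_fixP/commgP]. Qed.

Section EquivariantEndomorphisms.
Variables (gT : finGroupType) (V D : {group gT}).
Implicit Types (f h : {ffun gT -> gT}) (a b g v w : gT).

Definition conj_commutant (f : {ffun gT -> gT}) : {set gT} :=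
  [set g in 'N(V) | [forall a in V, f (a ^ g) == f a ^ g]].

Lemma conj_commutantP f g :
  reflect (g \in 'N(V) /\ {in V, forall a, f (a ^ g) = f a ^ g}) (g \in conj_commutant f).
Proof.
apply: (iffP setIdP) => -[nVg fJ]; split=> //.
  by move=> a Va; apply/eqP/(forall_inP fJ).
by apply/forall_inP => a Va; rewrite fJ.
Qed.

Lemma group_set_conj_commutant f : group_set (conj_commutant f).
Proof.
apply/group_setP; split; first by apply/conj_commutantP; split=> // a _; rewrite !conjg1.
move=> g h /conj_commutantP[nVg fJg] /conj_commutantP[nVh fJh].
apply/conj_commutantP; split=> [|a Va]; first exact: groupM.
by rewrite !conjgM fJh ?memJ_norm ?fJg.
Qed.

Canonical conj_commutant_group f := group (group_set_conj_commutant f).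

Definition Dendo : {set {ffun gT -> gT}} :=
  [set f : {ffun gT -> gT} |
     [forall a in V, (f a \in V) && [forall b in V, f (a * b) == f a * f b]]
     && (D \subset conj_commutant f)].

Hypothesis nVD : D \subset 'N(V).

Lemma DendoP f :
  reflect [/\ {in V, forall a, f a \in V}, {in V &, {morph f : a b / a * b}}
            & {in V & D, forall a g, f (a ^ g) = f a ^ g}]
          (f \in Dendo).
Proof.
rewrite inE; apply: (iffP andP) => [[/forall_inP fVM /subsetP sDC] | [fV fM fJ]].
  split=> [a /fVM/andP[] // | a b Va Vb | a g Va /sDC/conj_commutantP[_ fJ]].
    by have /andP[_ /forall_inP fM] := fVM a Va; apply/eqP/fM.
  exact: fJ.
split.
  by apply/forall_inP => a Va; rewrite fV //=; apply/forall_inP => b Vb; rewrite fM.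
apply/subsetP => g Dg; apply/conj_commutantP.
by split=> [|a Va]; [apply: (subsetP nVD) | apply: fJ].
Qed.

Lemma Dendo1 : [ffun=> 1] \in Dendo.
Proof. by apply/DendoP; split=> [a _ | a b _ _ | a g _ _]; rewrite !ffunE ?mulg1 ?conj1g. Qed.

Lemma Dendo_id : [ffun a => a] \in Dendo.
Proof. by apply/DendoP; split=> [a | a b _ _ | a g _ _]; rewrite !ffunE. Qed.

Lemma Dendo_comp f h : f \in Dendo -> h \in Dendo -> [ffun a => f (h a)] \in Dendo.
Proof.
move=> /DendoP[fV fM fJ] /DendoP[hV hM hJ].
apply/DendoP; split=> [a Va | a b Va Vb | a g Va Dg]; rewrite !ffunE.
- exact/fV/hV.
- by rewrite hM ?fM ?hV.
- by rewrite hJ ?fJ ?hV.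
Qed.

Hypothesis abelV : abelian V.

Lemma commute_abelian a b : a \in V -> b \in V -> commute a b.
Proof. by move=> Va Vb; apply: (centsP abelV). Qed.

Lemma abelian_mulgACA a b c e : b \in V -> c \in V -> a * b * (c * e) = a * c * (b * e).
Proof. by move=> Vb Vc; rewrite -!mulgA (mulgA b) (commute_abelian Vb Vc) !mulgA. Qed.

Lemma DendoM f h : f \in Dendo -> h \in Dendo -> [ffun a => f a * h a] \in Dendo.
Proof.
move=> /DendoP[fV fM fJ] /DendoP[hV hM hJ].
apply/DendoP; split=> [a Va | a b Va Vb | a g Va Dg]; rewrite !ffunE ?groupM ?fV ?hV //.
  by rewrite fM // hM // abelian_mulgACA ?fV ?hV.
by rewrite fJ // hJ // conjMg.
Qed.

Definition endo_orbit v : {set gT} := [set f v | f : {ffun gT -> gT} in Dendo].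

Lemma group_set_endo_orbit v : group_set (endo_orbit v).
Proof.
apply/group_setP; split; first by apply/imsetP; exists [ffun=> 1]; rewrite ?Dendo1 ?ffunE.
move=> _ _ /imsetP[f fE ->] /imsetP[h hE ->].
by apply/imsetP; exists [ffun a => f a * h a]; rewrite ?DendoM ?ffunE.
Qed.

Canonical endo_orbit_group v := group (group_set_endo_orbit v).

Lemma endo_orbit_id v : v \in endo_orbit v.
Proof. by apply/imsetP; exists [ffun a => a]; rewrite ?Dendo_id ?ffunE. Qed.

Lemma endo_orbit_Dendo v f w : f \in Dendo -> w \in endo_orbit v -> f w \in endo_orbit v.
Proof.
move=> fE /imsetP[h hE ->].
by apply/imsetP; exists [ffun a => f (h a)]; rewrite ?Dendo_comp ?ffunE.
Qed.

Lemma endo_orbit_cent1 v g : g \in D -> v \in 'C_V[g] -> endo_orbit v \subset 'C_V[g].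
Proof.
move=> Dg /setIP[Vv /cent1_conjgP vg]; apply/subsetP => _ /imsetP[f /DendoP[fV _ fJ] ->].
by rewrite inE fV //; apply/cent1_conjgP; rewrite -fJ ?vg.
Qed.

Hypothesis irrV : acts_irreducibly D V 'J.

Lemma acts_irreducibly_norm_eq (H : {group gT}) :
  H \subset V -> H :!=: 1 -> D \subset 'N(H) -> H :=: V.
Proof. by move=> sHV ntH nHD; apply: (mingroupP irrV).2 sHV; rewrite ntH astabsJ. Qed.

Lemma Dendo_injective f a : f \in Dendo -> a \in V -> f a != 1 -> {in V &, injective f}.
Proof.
case/DendoP=> fV fM fJ Va nfa; pose fm := Morphism fM.
apply/(injmP (f := fm))/trivgP; have [// | ntK] := eqsVneq ('ker fm) 1.
have nKg : D \subset 'N('ker fm).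
  apply/subsetP => g Dg; rewrite inE; apply/subsetP => _ /imsetP[b Kb ->].
  have Vb := dom_ker Kb; have Vbg : b ^ g \in V by rewrite memJ_norm ?(subsetP nVD).
  by apply/(kerP fm Vbg); rewrite /= fJ // -[f b]/(fm b) (mker Kb) conj1g.
have sKV : 'ker fm \subset V by apply/subsetP => b /dom_ker.
have KV := acts_irreducibly_norm_eq sKV ntK nKg.
by case/negP: nfa; rewrite -KV in Va; rewrite -[f a]/(fm a) (mker Va).
Qed.

Variables (x y : gT).
Hypotheses (xx : x * x = 1) (yy : y * y = 1).
Hypotheses (Dx : x \in D) (Dy : y \in D) (Dxy : D :=: <<[set x; y]>>).

Lemma Dendo_trace : [ffun a => a ^ (x * y) * a ^ (y * x)] \in Dendo.
Proof.
have [nVx nVy] := (subsetP nVD x Dx, subsetP nVD y Dy).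
set c := [ffun a => _].
have cV a : a \in V -> c a \in V by move=> Va; rewrite ffunE groupM ?memJ_norm ?groupM.
have sDC : D \subset conj_commutant c.
  rewrite Dxy gen_subG subUset !sub1set; apply/andP.
  split; apply/conj_commutantP; split=> // a Va; rewrite !ffunE [RHS]conjMg -!conjgM.
    rewrite (mulgA x x) xx mul1g -(mulgA y x x) xx mulg1 (mulgA x y x).
    by apply: commute_abelian; rewrite memJ_norm ?groupM.
  rewrite (mulgA y y) yy mul1g -(mulgA x y y) yy mulg1 (mulgA y x y).
  by apply: commute_abelian; rewrite memJ_norm ?groupM.
apply/DendoP; split=> // [a b Va Vb | a g Va /(subsetP sDC)/conj_commutantP[_]]; last exact.
by rewrite !ffunE !conjMg abelian_mulgACA ?memJ_norm ?groupM.
Qed.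

Lemma endo_orbit_conj_rot v : v \in 'C_V[x] ->
  endo_orbit v :^ (y * x) \subset endo_orbit v * endo_orbit v :^ y.
Proof.
move=> Cv; apply/subsetP=> _ /imsetP[w Ww ->].
have /setIP[Vw /cent1_conjgP wx] := subsetP (endo_orbit_cent1 Dx Cv) w Ww.
have [nVx nVy] := (subsetP nVD x Dx, subsetP nVD y Dy).
set c := [ffun a => a ^ (x * y) * a ^ (y * x)].
have -> : w ^ (y * x) = c w * (w^-1) ^ y.
  rewrite ffunE (conjgM w x y) wx conjVg.
  by rewrite (commute_abelian (a := w ^ y)) ?memJ_norm ?groupM // mulgK.
by rewrite mem_mulg ?memJ_conjg ?groupV // endo_orbit_Dendo ?Dendo_trace.
Qed.

Hypothesis ncycV : ~~ cyclic V.

Lemma irreducible_norm_eq (H : {group gT}) :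
  H \subset V -> H :!=: 1 -> x \in 'N(H) -> y \in 'N(H) -> H :=: V.
Proof.
move=> sHV ntH nHx nHy; apply: acts_irreducibly_norm_eq => //.
by rewrite Dxy gen_subG subUset !sub1set nHx nHy.
Qed.

Lemma cycle_norm_trivial u : u \in V -> u ^ x \in <[u]> -> u ^ y \in <[u]> -> u = 1.
Proof.
move=> Vu ux uy; have [// | ntu] := eqVneq u 1; case/negP: ncycV.
have nJ g : u ^ g \in <[u]> -> g \in 'N(<[u]>) by rewrite inE -cycleJ cycle_subG.
by rewrite -(irreducible_norm_eq (H := <[u]>)) ?cycle_cyclic ?cycle_subG ?cycle_eq1 ?nJ.
Qed.

Lemma cent1_cent1J_trivial : 'C_V[x] :&: 'C[x ^ y] = 1.
Proof.
have [// | ntZ] := eqsVneq ('C_V[x] :&: 'C[x ^ y]) 1; exfalso.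
have nVy := subsetP nVD y Dy.
have nZx : x \in 'N('C_V[x] :&: 'C[x ^ y]).
  by apply: (subsetP (cent_sub _)); rewrite -sub_cent1 subIset ?subsetIr.
have nZy : y \in 'N('C_V[x] :&: 'C[x ^ y]).
  by rewrite inE !conjIg -!cent1J (normP nVy) -conjgM yy conjg1 setIAC.
have sZV : 'C_V[x] :&: 'C[x ^ y] \subset V by rewrite subIset ?subsetIl.
have ZV := irreducible_norm_eq sZV ntZ nZx nZy.
have ux u : u \in V -> u ^ x = u.
  by move=> Vu; apply/cent1_conjgP; move: Vu; rewrite -ZV => /setIP[/setIP[]].
have /trivgPn[u Vu ntu] : V :!=: 1 by apply: contraNneq ncycV => ->; apply: cyclic1.
have Vuy : u ^ y \in V by rewrite memJ_norm.
have [uuy1 | ntuuy] := eqVneq (u * u ^ y) 1.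
  apply: (negP ntu); apply/eqP/cycle_norm_trivial => //; first by rewrite ux ?cycle_id.
  by rewrite -(mulKg u (u ^ y)) uuy1 mulg1 groupV cycle_id.
have Vw : u * u ^ y \in V by rewrite groupM.
apply: (negP ntuuy); apply/eqP/cycle_norm_trivial => //; first by rewrite ux ?cycle_id.
by rewrite conjMg -conjgM yy conjg1 commute_abelian ?cycle_id.
Qed.

Lemma endo_orbit_mulJ v :
  v \in 'C_V[x] -> v != 1 -> endo_orbit v * endo_orbit v :^ y = V.
Proof.
move=> Cv ntv; have nVy := subsetP nVD y Dy.
have sWCx : endo_orbit v \subset 'C_V[x] := endo_orbit_cent1 Dx Cv.
have sWV : endo_orbit v \subset V := subset_trans sWCx (subsetIl _ _).
have sWyV : endo_orbit v :^ y \subset V by rewrite -(normP nVy) conjSg.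
have cWWy : endo_orbit v :^ y \subset 'C(endo_orbit v).
  exact: sub_abelian_cent2 abelV sWyV sWV.
rewrite -(cent_joinEr cWWy); apply: irreducible_norm_eq.
- by rewrite join_subG sWV.
- by apply/trivgPn; exists v; rewrite ?(subsetP (joing_subl _ _)) ?endo_orbit_id.
- have cWx : x \in 'C(endo_orbit v) by rewrite -sub_cent1 (subset_trans sWCx) ?subsetIr.
  rewrite [X in x \in 'N(X)]/= (cent_joinEr cWWy) inE conjsMg -conjsgM.
  rewrite (normP (subsetP (cent_sub _) x cWx)).
  by rewrite (subset_trans (mulgS _ (endo_orbit_conj_rot Cv))) // mulgA mulGid.
rewrite [X in y \in 'N(X)]/= (cent_joinEr cWWy) inE conjsMg -conjsgM yy conjsg1.
by rewrite (centC cWWy).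
Qed.

Lemma cent1_sub_endo_orbit v : v \in 'C_V[x] -> v != 1 -> 'C_V[x] \subset endo_orbit v.
Proof.
move=> Cv ntv; apply/subsetP => w Cw; have sWCx := endo_orbit_cent1 Dx Cv.
have /mulsgP[a c Wa Wyc defw] : w \in endo_orbit v * endo_orbit v :^ y.
  by rewrite endo_orbit_mulJ //; case/setIP: Cw.
suff c1 : c = 1 by rewrite defw c1 mulg1.
apply/set1gP; rewrite -cent1_cent1J_trivial; apply/setIP; split.
  have -> : c = a^-1 * w by rewrite defw mulKg.
  by rewrite groupM ?groupV //; apply: (subsetP sWCx).
by apply: subsetP Wyc; rewrite cent1J conjSg (subset_trans sWCx) ?subsetIr.
Qed.

End EquivariantEndomorphisms.

Theorem proposition3p2 (gT : finGroupType) (p r d : nat)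
    (G V D : {group gT}) (x y v v' : gT) :
  prime p -> odd p -> 3 <= r -> ~~ (p %| r) -> 2 <= d ->
  p.-abelem V -> #|V| = (p ^ d)%N ->
  V ><| D = G ->
  D \isog 'D_(2 * r)%N ->
  acts_irreducibly D V 'J ->
  x \in D -> y \in D -> #[x] = 2 -> #[y] = 2 -> D :=: <<[set x; y]>> ->
  v \in 'C_V[x] -> v != 1 -> v' \in 'C_V[x] -> v' != 1 ->
  rotamap_iso G (v * x) y (v' * x) y.
Proof.
move=> pr_p _ _ _ d2 abelemV cardV defG _ irrV Dx Dy ox oy Dxy Cv ntv Cv' ntv'.
have [_ defVD nVD _] := sdprodP defG.
have abelV := abelem_abelian abelemV.
have ncycV : ~~ cyclic V by rewrite (abelem_cyclic abelemV) cardV pfactorK // -ltnNge.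
have xx : x * x = 1 by rewrite -expg2 -ox expg_order.
have yy : y * y = 1 by rewrite -expg2 -oy expg_order.
have sCW := cent1_sub_endo_orbit nVD abelV irrV xx yy Dx Dy Dxy ncycV Cv ntv.
have /imsetP[f fE fv] := subsetP sCW v' Cv'.
have /(DendoP nVD)[fV fM fJ] := fE.
have [Vv _] := setIP Cv.
have injf : 'injm (Morphism fM).
  by apply/injmP; apply: (Dendo_injective nVD irrV fE Vv); rewrite -fv.
have sfV : Morphism fM @* V \subset V by apply/subsetP => _ /morphimP[a _ Va ->]; apply: fV.
have [phi [injphi imphi phiE]] := sdprod_equivariant_aut defG injf sfV fJ.
have phi_vx : phi (v * x) = v' * x by rewrite phiE //= fv.
have phi_y : phi y = y by rewrite -[y in LHS]mul1g phiE ?morph1 ?mul1g.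
have Gvx : v * x \in G by rewrite -defVD mem_mulg.
have Gy : y \in G by rewrite -defVD -[y]mul1g mem_mulg.
by rewrite -phi_vx -{2}phi_y; apply: rotamap_iso_morphim.
Qed.
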